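(* Let $\mathfrak{I}=(\mathcal{I},[\mathcal{F}_1,\dots,\mathcal{F}_k],\mathcal{X},\pi,\sim,\mathcal{S})$ be a domain constrained interpretation and $C_1,C_2,D_1,D_2$ natural concepts that are fully specified by their features in $\mathfrak{I}$, i.e. $N^{\mathcal{I}}=\{d\in\Delta^{\mathcal{I}}\mid\varphi(N)\subseteq\pi(d)\}$ for $N\in\{C_1,C_2,D_1,D_2\}$. If $\mathfrak{I}$ satisfies the analogy assertion $C_1:D_1::C_2:D_2$ and the concept inclusion $C_1\sqsubseteq C_2$, then $\mathfrak{I}$ also satisfies $D_1\sqsubseteq D_2$.
   Context: Concepts: $C,D::=\top\mid\bot\mid A\mid C\sqcap D\mid \exists r.C\mid N$; natural concepts: $N,N'::=A'\mid N\sqcap N'\mid N\bowtie N'\mid \exists r'.N$, with $A$ a concept name, $A'$ a natural concept name, $r$ a role name, $r'$ an intra-domain role name. A domain constrained interpretation is $\mathfrak{I}=(\mathcal{I},[\mathcal{F}_1,\dots,\mathcal{F}_k],\mathcal{X},\pi,\sim,\mathcal{S})$ where $\mathcal{I}=(\Delta^{\mathcal{I}},\cdot^{\mathcal{I}})$ is a classical DL interpretation, $[\mathcal{F}_1,\dots,\mathcal{F}_k]$ partitions a nonempty finite set $\mathcal{F}$, $\mathcal{X}\subseteq2^{\mathcal{F}}$ with $\mathcal{F}\in\mathcal{X}$, $\pi:\Delta^{\mathcal{I}}\to2^{\mathcal{F}}$, $\sim$ an equivalence relation on $\{1,\dots,k\}$, $\mathcal{S}=\{\sigma_{(s,t)}\mid(s,t)\in\sim\}$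 with $\sigma_{(s,t)}:\mathcal{F}_s\to\mathcal{F}_t$ bijections. With $\mathcal{C}=\{G\subseteq\mathcal{F}\mid X\not\subseteq G\ \forall X\in\mathcal{X}\}$ and $\mathcal{C}^i=\{G\in\mathcal{C}\mid G\subseteq\mathcal{F}_i\}$ it is required: (1) $X\not\subseteq\pi(d)$ for all $d$, $X\in\mathcal{X}$; (2) each $G\in\mathcal{C}$ is $\pi(d)$ for some $d$; (3) $\sigma_{(s,t)}^{-1}=\sigma_{(t,s)}$, $\sigma_{(t,u)}\circ\sigma_{(s,t)}=\sigma_{(s,u)}$; (4) $\sigma_{(i,j)}(G)\in\mathcal{C}$ for $G\in\mathcal{C}^i$, $(i,j)\in\sim$; (5) $\{f,g\}\in\mathcal{X}$ whenever $f\in\mathcal{F}_i$, $g\in\mathcal{F}_j$, $(i,j)\in\sim$, $i\neq j$. $\varphi(C)=\bigcap\{\pi(d)\mid d\in C^{\mathcal{I}}\}$ ($=\mathcal{F}$ if $C^{\mathcal{I}}=\emptyset$). Concepts are interpreted as usual, with $(N\bowtie N')^{\mathcal{I}}=\{d\mid\varphi(N)\cap\varphi(N')\subseteq\pi(d)\}$, and every intra-domain role name $r$ interpreted as an intra-domain relation: there is $\kappa_r:2^{\mathcal{F}}\to2^{\mathcal{F}}$ with $(\exists r.C)^{\mathcal{I}}=\{d\mid\kappa_r(\varphi(C))\subseteq\pi(d)\}$ for all $C$, $\kappa_r(G)=\bigcup_i\kappa_r(G\cap\mathcal{F}_i)$ for $G\in\mathcal{C}$, $\kappa_r(G)\subseteq\mathcal{F}_i$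 for $G\in\mathcal{C}^i$, $\kappa_r(\sigma_{(i,j)}(G))=\sigma_{(i,j)}(\kappa_r(G))$ for $(i,j)\in\sim$, $G\in\mathcal{C}^i$, and $\kappa_r(G)\neq\emptyset$ for $G\in\mathcal{C}^i\setminus\{\emptyset\}$. $\delta(C)=\{i\mid\mathcal{F}_i\cap\varphi(C)\neq\emptyset\}$. For $U=\{(s_1,t_1),\dots,(s_l,t_l)\}\subseteq\sim$ with pairwise distinct $s_i$ and pairwise distinct $t_i$, the domain translation $\sigma_U:\mathcal{F}\to\mathcal{F}$ maps $f\in\mathcal{F}_{s_i}$ to $\sigma_{(s_i,t_i)}(f)$ and fixes all other features; $\mathrm{src}(U)=\{s_i\}$, $\mathrm{tgt}(U)=\{t_i\}$. $\mu(C,D)$ is the set of $\sigma_U$ with $\varphi(D)=\sigma_U(\varphi(C))$, $\mathrm{src}(U)\subseteq\delta(C)$, $\mathrm{tgt}(U)\cap(\delta(C)\setminus\mathrm{src}(U))=\emptyset$. An analogy assertion $C_1:C_2::D_1:D_2$ is satisfied in $\mathfrak{I}$ iff $\mu(C_1,C_2)\cap\mu(D_1,D_2)\neq\emptyset$; a concept inclusion $C\sqsubseteq D$ is satisfied iff $C^{\mathcal{I}}\subseteq D^{\mathcal{I}}$. *)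

From HB Require Import structures.
From mathcomp Require Import all_boot.
From mathcomp Require Import boolp.
Set Implicit Arguments. Unset Strict Implicit. Unset Printing Implicit Defensive.

(* Concept syntax over concept names CN and role names RN.
   CBow C D is N ⋈ N'. Well-formedness is given by is_concept / is_natural. *)
Inductive concept (CN RN : Type) : Type :=
| CTop | CBot
| CName of CN
| CAnd of concept CN RN & concept CN RN
| CEx of RN & concept CN RN
| CBow of concept CN RN & concept CN RN.
Arguments CTop {CN RN}. Arguments CBot {CN RN}.

Section Syntax.
Variables (CN RN : Type) (natn : CN -> Prop) (intra : RN -> Prop).
Fixpoint is_natural (C : concept CN RN) : Prop :=
  match C with
  | CName a => natn a
  | CAnd C D => is_natural C /\ is_natural D
  | CBow C D => is_natural C /\ is_natural D
  | CEx r C => intra r /\ is_natural C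
  | _ => False
  end.
Fixpoint is_concept (C : concept CN RN) : Prop :=
  match C with
  | CTop | CBot | CName _ => True
  | CAnd C D => is_concept C /\ is_concept D
  | CEx _ C => is_concept C
  | CBow C D => is_natural C /\ is_natural D
  end.
End Syntax.

(* The partition of F is given by
   part : F -> 'I_k  (F_i = part^-1(i), domains indexed 0..k-1);
   sigma s t is sigma_(s,t) (only its restriction to F_s matters). *)
Record dcint (CN RN : Type) := DCInt {
  Dom : Type;
  cnI : CN -> Dom -> Prop;
  rnI : RN -> Dom -> Dom -> Prop;
  Feat : finType;
  kk : nat;
  part : Feat -> 'I_kk;
  Xs : {set {set Feat}};
  pi : Dom -> {set Feat};
  sim : rel 'I_kk;
  sigma : 'I_kk -> 'I_kk -> Feat -> Feat
}.
Arguments Dom {CN RN} _. Arguments cnI {CN RN} _ _ _. Arguments rnI {CN RN} _ _ _ _.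
Arguments Feat {CN RN} _. Arguments kk {CN RN} _. Arguments part {CN RN} _ _.
Arguments Xs {CN RN} _. Arguments pi {CN RN} _ _. Arguments sim {CN RN} _ _ _.
Arguments sigma {CN RN} _ _ _ _.

Section Semantics.
Variables (CN RN : Type) (I : dcint CN RN).
Local Notation F := (Feat I).
Local Notation k := (kk I).

(* phi of an extension E ⊆ Δ: intersection of pi(d), d ∈ E (= F if E empty) *)
Definition phiE (E : Dom I -> Prop) : {set F} :=
  [set f | `[< forall d, E d -> f \in pi I d >]].

Fixpoint ext (C : concept CN RN) : Dom I -> Prop :=
  match C with
  | CTop => fun _ => True
  | CBot => fun _ => False
  | CName a => cnI I a
  | CAnd C D => fun d => ext C d /\ ext D d
  | CEx r C => fun d => exists e, rnI I r d e /\ ext C e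
  | CBow C D => fun d => phiE (ext C) :&: phiE (ext D) \subset pi I d
  end.

Definition phi (C : concept CN RN) : {set F} := phiE (ext C).

Definition dom (i : 'I_k) : {set F} := [set f | part I f == i].

Definition compat (G : {set F}) : Prop := forall Y, Y \in Xs I -> ~ (Y \subset G).
Definition compat_in (i : 'I_k) (G : {set F}) : Prop := compat G /\ G \subset dom i.

Definition sig_img (i j : 'I_k) (G : {set F}) : {set F} := sigma I i j @: G.

(* kappa witnesses that r is interpreted as an intra-domain relation *)
Definition intra_kappa (is_conc : concept CN RN -> Prop) (r : RN)
    (kappa : {set F} -> {set F}) : Prop :=
  [/\ (forall C, is_conc C -> forall d, ext (CEx r C) d <-> kappa (phi C) \subset pi I d),
      (forall G, compat G -> kappa G = \bigcup_(i < k) kappa (G :&: dom i)),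
      (forall i G, compat_in i G -> kappa G \subset dom i),
      (forall i j G, sim I i j -> compat_in i G -> kappa (sig_img i j G) = sig_img i j (kappa G))
    & (forall i G, compat_in i G -> G != set0 -> kappa G != set0)].

Definition is_dci (natn : CN -> Prop) (intra : RN -> Prop) : Prop :=
  inhabited (Dom I) /\
  (0 < #|F| /\ (forall i : 'I_k, exists f, part I f = i)) /\
  [set: F] \in Xs I /\
  (forall d, compat (pi I d)) /\ (forall G, compat G -> exists d, pi I d = G) /\
  [/\ forall i, sim I i i, forall i j, sim I i j -> sim I j i
    & forall i j l, sim I i j -> sim I j l -> sim I i l] /\
  (* sigma_(s,t) maps F_s to F_t, and (3); together these make each
     sigma_(s,t) a bijection F_s -> F_t *)
  [/\ forall s t f, sim I s t -> part I f = s -> part I (sigma I s t f) = t,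
      forall s t f, sim I s t -> part I f = s -> sigma I t s (sigma I s t f) = f
    & forall s t u f, sim I s t -> sim I t u -> part I f = s ->
         sigma I t u (sigma I s t f) = sigma I s u f] /\
  (forall i j G, sim I i j -> compat_in i G -> compat (sig_img i j G)) /\
  (forall i j f g, sim I i j -> i != j -> part I f = i -> part I g = j -> [set f; g] \in Xs I) /\
  (forall r, intra r -> exists kappa, intra_kappa (is_concept natn intra) r kappa).

Definition delta (C : concept CN RN) : {set 'I_k} :=
  [set i | [exists f in phi C, part I f == i]].

Definition valid_U (U : {set 'I_k * 'I_k}) : Prop :=
  [/\ forall p, p \in U -> sim I p.1 p.2,
      forall p q, p \in U -> q \in U -> p.1 = q.1 -> p = q
    & forall p q, p \in U -> q \in U -> p.2 = q.2 -> p = q].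

Definition srcU (U : {set 'I_k * 'I_k}) : {set 'I_k} := [set p.1 | p in U].
Definition tgtU (U : {set 'I_k * 'I_k}) : {set 'I_k} := [set p.2 | p in U].

Definition sigmaU (U : {set 'I_k * 'I_k}) (f : F) : F :=
  if [pick t | (part I f, t) \in U] is Some t then sigma I (part I f) t f else f.

Definition in_mu (C D : concept CN RN) (g : F -> F) : Prop :=
  exists U, [/\ valid_U U, (forall f, g f = sigmaU U f),
     phi D = sigmaU U @: phi C,
     srcU U \subset delta C
   & [disjoint tgtU U & delta C :\: srcU U]].

Definition sat_analogy (C1 C2 D1 D2 : concept CN RN) : Prop :=
  exists g : F -> F, in_mu C1 C2 g /\ in_mu D1 D2 g.

Definition sat_incl (C D : concept CN RN) : Prop := forall d, ext C d -> ext D d.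

Definition fully_specified (N : concept CN RN) : Prop :=
  forall d, ext N d <-> phi N \subset pi I d.

End Semantics.

From mathcomp Require Import all_boot.
From mathcomp Require Import boolp.
(* Imported last, so that the feature map [pi] of Defs shadows mathcomp's [pi]. *)
From Pilot Require Import Defs.
Set Implicit Arguments. Unset Strict Implicit.

(* Feature sets are antitone in the extension: C1 ⊑ C2 gives φ(C2) ⊆ φ(C1).
   The common translation g of the analogy maps φ(C_i) onto φ(D_i), so it
   carries this inclusion over to φ(D2) ⊆ φ(D1); since D2 is fully specified
   by its features, every element of D1 (whose features contain φ(D1)) is in D2. *)

Section FeatureSets.
Variables (CN RN : Type) (I : dcint CN RN).

Lemma phi_sub_pi (C : concept CN RN) (d : Dom I) : ext C d -> phi I C \subset pi I d.
Proof. by move=> Cd; apply/subsetP => f; rewrite inE => /asboolP; apply. Qed.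

Lemma phi_incl (C D : concept CN RN) : sat_incl I C D -> phi I D \subset phi I C.
Proof.
move=> CD; apply/subsetP => f; rewrite !inE => /asboolP Df.
by apply/asboolP => d /CD /Df.
Qed.

Lemma fully_specified_inclP (C D : concept CN RN) :
  fully_specified I D -> sat_incl I C D <-> phi I D \subset phi I C.
Proof.
move=> fD; split; first exact: phi_incl.
by move=> DC d /phi_sub_pi Cd; apply/fD; apply: subset_trans Cd.
Qed.

Lemma in_mu_phi (C D : concept CN RN) g : @in_mu _ _ I C D g -> phi I D = g @: phi I C.
Proof. by move=> [U [_ gU -> _ _]]; apply: eq_imset => f; rewrite gU. Qed.

End FeatureSets.

Theorem proposition10 (CN RN : Type) (natn : CN -> Prop) (intra : RN -> Prop)
  (I : dcint CN RN) (C1 C2 D1 D2 : concept CN RN) :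
  is_dci I natn intra ->
  is_natural natn intra C1 -> is_natural natn intra C2 ->
  is_natural natn intra D1 -> is_natural natn intra D2 ->
  fully_specified I C1 -> fully_specified I C2 ->
  fully_specified I D1 -> fully_specified I D2 ->
  sat_analogy I C1 D1 C2 D2 ->
  sat_incl I C1 C2 ->
  sat_incl I D1 D2.
Proof.
move=> _ _ _ _ _ _ _ _ fD2 [g [muC1D1 muC2D2]] /phi_incl C21.
apply/(fully_specified_inclP D1 fD2).
by rewrite (in_mu_phi muC1D1) (in_mu_phi muC2D2) imsetS.
Qed.
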